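(* For every $A \in S(2n,\mathbb{R})$ and every $P \in \operatorname{Sp}(2n)$, $\operatorname{Pf}(P^T A P) = \operatorname{Pf}(A)$ and $\operatorname{s}(P^T A P) = \operatorname{s}(A)$; i.e. the Pfaffian and the sum function are invariant under the action $\rho(P,A) = P^T A P$.
   Context: $S(2n,\mathbb{R}) = \{A \in M(2n,\mathbb{R}) : A^T = -A,\ \det A\neq 0\}$. $J$ is the $2n\times 2n$ block-diagonal matrix with $n$ diagonal blocks $J_0 = \begin{bmatrix} 0 & 1 \\ -1 & 0\end{bmatrix}$, and $\operatorname{Sp}(2n) = \{P\in M(2n,\mathbb{R}) : P^T J P = J\}$. $\operatorname{Pf}(A) = \frac{1}{2^n n!}\sum_{\sigma\in S_{2n}}\operatorname{sgn}(\sigma)\prod_{i=1}^n A_{\sigma(2i-1),\sigma(2i)}$, and $\operatorname{s}(A) = \sum_{i=1}^n A_{2i-1,2i}$. *)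

(* Real skew-symmetric matrices of size 2n, over any realFieldType
   (the paper's R; Stdlib's R is an instance). Indices are 0-based. *)
From HB Require Import structures.
From mathcomp Require Import all_boot all_order all_algebra all_fingroup.
From mathcomp Require Import zify.
Set Implicit Arguments. Unset Strict Implicit. Unset Printing Implicit Defensive.
Import Order.TTheory GRing.Theory Num.Theory.
Local Open Scope ring_scope.

Lemma ev_lt (n : nat) (i : 'I_n) : (2 * i < 2 * n)%N.
Proof. by rewrite ltn_pmul2l. Qed.

Lemma od_lt (n : nat) (i : 'I_n) : ((2 * i).+1 < 2 * n)%N.
Proof. have := ltn_ord i; lia. Qed.

(* 0-based index 2i (paper's 2i+1 - 1 with i shifted) and 2i+1 *)
Definition ev (n : nat) (i : 'I_n) : 'I_(2 * n) := Ordinal (ev_lt i).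
Definition od (n : nat) (i : 'I_n) : 'I_(2 * n) := Ordinal (od_lt i).

Definition skew_invertible (R : realFieldType) (n : nat) (A : 'M[R]_(2 * n)) : Prop :=
  A^T = - A /\ \det A != 0.

(* J = block diagonal with n blocks [[0,1],[-1,0]] *)
Definition Jmat (R : realFieldType) (n : nat) : 'M[R]_(2 * n) :=
  \matrix_(k, l)
    (if ~~ odd k && (nat_of_ord l == k.+1) then 1
     else if odd k && ((nat_of_ord l).+1 == k) then -1 else 0).

Definition symplectic (R : realFieldType) (n : nat) (P : 'M[R]_(2 * n)) : Prop :=
  P^T *m Jmat R n *m P = Jmat R n.

Definition Pf (R : realFieldType) (n : nat) (A : 'M[R]_(2 * n)) : R :=
  ((2 ^ n * n`!)%:R)^-1 *
  \sum_(s : 'S_(2 * n)) (-1) ^+ s * \prod_(i < n) A (s (ev i)) (s (od i)).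

Definition ssum (R : realFieldType) (n : nat) (A : 'M[R]_(2 * n)) : R :=
  \sum_(i < n) A (ev i) (od i).

(* Write F C = \sum_s sgn s \prod_i C_{s(2i),s(2i+1)} for the Pfaffian without its
   normalising factor.  Expanding every entry of B^T C B and regrouping by the row
   indices chosen for each pair (2i, 2i+1), non-injective choices give matrices
   with two equal rows and the injective ones reassemble \det B, so
   F (B^T C B) = \det B * F C for every square C.  For C = J each nonzero term of
   F J equals 1: moving one flipped pair back to the order (even, odd) changes
   neither the term nor its nonvanishing, and unflipped terms come from even
   permutations of the pairs.  Hence F J > 0, and P^T J P = J forces \det P = 1.
   For the sum function, tr (J X) = -2 s(X) on skew matrices, and
   tr (J P^T A P) = tr (P J P^T A) = tr (J A) because P^T is symplectic too. *)

From HB Require Import structures.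
From mathcomp Require Import all_boot all_order all_algebra all_fingroup.
From mathcomp Require Import zify.
Import GRing.Theory Num.Theory.
Local Open Scope ring_scope.

Set Implicit Arguments. Unset Strict Implicit. Unset Printing Implicit Defensive.

Section PairedIndices.
Variable n : nat.
Local Notation m := (2 * n)%N.

Lemma ord_half_subproof (k : 'I_m) : (k %/ 2 < n)%N.
Proof. have := ltn_ord k; lia. Qed.

Definition ord_half (k : 'I_m) : 'I_n := Ordinal (ord_half_subproof k).

Lemma ord_half_ev i : ord_half (ev i) = i.
Proof. by apply: val_inj => /=; lia. Qed.

Lemma ord_half_od i : ord_half (od i) = i.
Proof. by apply: val_inj => /=; lia. Qed.

Lemma odd_ev i : odd (ev i : 'I_m) = false.
Proof. by rewrite /= oddM. Qed.

Lemma odd_od i : odd (od i : 'I_m).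
Proof. by rewrite /= oddM. Qed.

Lemma ord_halfE (k : 'I_m) : k = if odd k then od (ord_half k) else ev (ord_half k).
Proof. by case: ifP => o; apply: val_inj => /=; lia. Qed.

Lemma ev_od_ind (P : 'I_m -> Prop) :
  (forall i, P (ev i)) -> (forall i, P (od i)) -> forall k, P k.
Proof. by move=> Pev Pod k; rewrite (ord_halfE k); case: ifP. Qed.

Lemma ev_inj : injective (@ev n).
Proof. by move=> a b /(congr1 val) /= eq_ab; apply: val_inj => /=; lia. Qed.

Lemma od_inj : injective (@od n).
Proof. by move=> a b /(congr1 val) /= eq_ab; apply: val_inj => /=; lia. Qed.

Lemma ev_neq_od (a b : 'I_n) : (ev a == od b :> 'I_m) = false.
Proof. by apply/eqP => /(congr1 val) /=; lia. Qed.

Lemma tperm_ev_od_ev (i l : 'I_n) : l != i -> tperm (ev i) (od i) (ev l) = ev l.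
Proof. by move=> nli; apply: tpermD; rewrite eq_sym ?ev_neq_od ?(inj_eq ev_inj). Qed.

Lemma tperm_ev_od_od (i l : 'I_n) : l != i -> tperm (ev i) (od i) (od l) = od l.
Proof. by move=> nli; apply: tpermD; rewrite ?ev_neq_od // eq_sym (inj_eq od_inj). Qed.

Lemma big_ord_pairs (T : Type) (idx : T) (op : Monoid.com_law idx) (F : 'I_m -> T) :
  \big[op/idx]_(k : 'I_m) F k = \big[op/idx]_(i < n) op (F (ev i)) (F (od i)).
Proof.
rewrite (partition_big ord_half xpredT) //; apply: eq_bigr => i _.
rewrite (bigD1 (ev i)) ?ord_half_ev //= (bigD1 (od i)) /=; last first.
  by rewrite ord_half_od eqxx eq_sym ev_neq_od.
rewrite big_pred0 ?Monoid.mulm1 // => k.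
apply/negP => /andP [/andP [/eqP half_k nev] nod].
by move: nev nod; rewrite (ord_halfE k) half_k; case: ifP; rewrite eqxx.
Qed.

End PairedIndices.

Arguments ev_inj {n}.
Arguments od_inj {n}.

Section PfaffianSum.
Variable R : comPzRingType.
Variable n : nat.
Local Notation m := (2 * n)%N.
Implicit Types (B C : 'M[R]_m) (s : 'S_m).

Definition pfaff_term C s : R := (-1) ^+ s * \prod_(i < n) C (s (ev i)) (s (od i)).

Definition pfaff_sum C : R := \sum_(s : 'S_m) pfaff_term C s.

Lemma pfaff_term_swap C s (i : 'I_n) : C^T = - C ->
  pfaff_term C (tperm (ev i) (od i) * s) = pfaff_term C s.
Proof.
move=> skewC; rewrite /pfaff_term odd_permM odd_tperm ev_neq_od signrN mulNr -mulrN.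
congr (_ * _); rewrite (bigD1 i) //= [RHS](bigD1 i) //= !permM tpermL tpermR.
have -> : C (s (od i)) (s (ev i)) = - C (s (ev i)) (s (od i)).
  by have := congr1 (fun M : 'M[R]_m => M (s (ev i)) (s (od i))) skewC; rewrite !mxE.
rewrite mulNr opprK; congr (_ * _); apply: eq_bigr => l nli.
by rewrite !permM tperm_ev_od_ev // tperm_ev_od_od.
Qed.

Lemma pfaff_term_neq0_entry C s i :
  pfaff_term C s != 0 -> C (s (ev i)) (s (od i)) != 0.
Proof.
by apply: contraNneq => entry0; rewrite /pfaff_term (bigD1 i) //= entry0 mul0r mulr0.
Qed.

Lemma congruence_mx_entry B C j k :
  (B^T *m C *m B) j k = \sum_(p : 'I_m * 'I_m) B p.1 j * C p.1 p.2 * B p.2 k.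
Proof.
rewrite mxE; under eq_bigr => b _ do rewrite mxE big_distrl /=.
by rewrite exchange_big pair_big /=; apply: eq_bigr => p _; rewrite mxE.
Qed.

Definition unpair (g : {ffun 'I_n -> 'I_m * 'I_m}) (k : 'I_m) : 'I_m :=
  if odd k then (g (ord_half k)).2 else (g (ord_half k)).1.

Lemma unpair_ev g i : unpair g (ev i) = (g i).1.
Proof. by rewrite /unpair odd_ev ord_half_ev. Qed.

Lemma unpair_od g i : unpair g (od i) = (g i).2.
Proof. by rewrite /unpair odd_od ord_half_od. Qed.

Definition perm_pairs s : {ffun 'I_n -> 'I_m * 'I_m} := [ffun i => (s (ev i), s (od i))].

Lemma unpair_perm_pairs s : unpair (perm_pairs s) =1 s.
Proof. by move=> k; rewrite /unpair !ffunE /= [in RHS](ord_halfE k); case: ifP. Qed.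

Lemma perm_pairs_inj : injective perm_pairs.
Proof. by move=> s1 s2 eq_s; apply/permP => k; rewrite -!unpair_perm_pairs eq_s. Qed.

Lemma pfaff_sum_congruence_rowsub B C : pfaff_sum (B^T *m C *m B) =
  \sum_(g : {ffun 'I_n -> 'I_m * 'I_m})
     (\prod_(i < n) C (g i).1 (g i).2) * \det (rowsub (unpair g) B).
Proof.
transitivity (\sum_(s : 'S_m) \sum_(g : {ffun 'I_n -> 'I_m * 'I_m}) (-1) ^+ s *
   \prod_(i < n) (B (g i).1 (s (ev i)) * C (g i).1 (g i).2 * B (g i).2 (s (od i)))).
  apply: eq_bigr => s _; rewrite -mulr_sumr; congr (_ * _).
  under eq_bigr => i _ do rewrite congruence_mx_entry.
  by rewrite bigA_distr_bigA.
rewrite exchange_big /=; apply: eq_bigr => g _.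
rewrite /determinant mulr_sumr; apply: eq_bigr => s _.
rewrite (big_ord_pairs _ (fun k => rowsub (unpair g) B k (s k))).
rewrite mulrCA; congr (_ * _); rewrite -big_split /=; apply: eq_bigr => i _.
by rewrite !mxE unpair_ev unpair_od mulrAC mulrC.
Qed.

Lemma pfaff_sum_congruence B C : pfaff_sum (B^T *m C *m B) = \det B * pfaff_sum C.
Proof.
rewrite pfaff_sum_congruence_rowsub (bigID (mem (perm_pairs @: setT))) /=.
rewrite [X in _ + X]big1 ?addr0 => [|g g_notin]; last first.
  suff [x [y neq_xy eq_xy]] : exists x, exists2 y, x != y & unpair g x = unpair g y.
    by rewrite (determinant_alternate neq_xy) ?mulr0 // => j; rewrite !mxE eq_xy.
  apply/injectivePn/negP => /injectiveP inj_g; move/negP: g_notin; apply.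
  apply/imsetP; exists (perm inj_g) => //; apply/ffunP => i.
  by rewrite ffunE !permE unpair_ev unpair_od; case: (g i).
rewrite big_imset /=; last by move=> s1 s2 _ _; apply: perm_pairs_inj.
rewrite /pfaff_sum mulr_sumr; apply: eq_big => [s|s _]; first by rewrite inE.
have -> : rowsub (unpair (perm_pairs s)) B = row_perm s B.
  by apply/matrixP => i j; rewrite !mxE unpair_perm_pairs.
rewrite row_permE det_mulmx det_perm /pfaff_term.
under eq_bigr => i _ do rewrite ffunE /=.
by rewrite mulrC mulrCA mulrA.
Qed.

End PfaffianSum.

Section PairPerm.
Variable n : nat.
Local Notation m := (2 * n)%N.

Definition pair_perm_fun (t : 'S_n) (k : 'I_m) : 'I_m :=
  if odd k then od (t (ord_half k)) else ev (t (ord_half k)).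

Lemma pair_perm_fun_inj t : injective (pair_perm_fun t).
Proof.
rewrite /pair_perm_fun.
elim/ev_od_ind => a; elim/ev_od_ind => b;
  rewrite ?odd_ev ?odd_od ?ord_half_ev ?ord_half_od.
- by move/ev_inj/perm_inj ->.
- by move/eqP; rewrite ev_neq_od.
- by move/eqP; rewrite eq_sym ev_neq_od.
- by move/od_inj/perm_inj ->.
Qed.

Definition pair_perm t : 'S_m := perm (@pair_perm_fun_inj t).

Lemma pair_perm_ev t i : pair_perm t (ev i) = ev (t i).
Proof. by rewrite permE /pair_perm_fun odd_ev ord_half_ev. Qed.

Lemma pair_perm_od t i : pair_perm t (od i) = od (t i).
Proof. by rewrite permE /pair_perm_fun odd_od ord_half_od. Qed.

Lemma pair_permM s t : pair_perm (s * t) = (pair_perm s * pair_perm t)%g.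
Proof.
by apply/permP; elim/ev_od_ind => i;
  rewrite permM ?pair_perm_ev ?pair_perm_od permM.
Qed.

Lemma pair_perm1 : pair_perm 1 = 1%g.
Proof.
by apply/permP; elim/ev_od_ind => i; rewrite perm1 ?pair_perm_ev ?pair_perm_od perm1.
Qed.

Lemma pair_perm_tperm a b :
  pair_perm (tperm a b) = (tperm (ev a) (ev b) * tperm (od a) (od b))%g.
Proof.
apply/permP; elim/ev_od_ind => i; rewrite permM.
- by rewrite pair_perm_ev -(inj_tperm _ _ _ ev_inj) [RHS]tpermD // eq_sym ev_neq_od.
- rewrite pair_perm_od (tpermD (x := ev a)) ?ev_neq_od //.
  exact: inj_tperm od_inj.
Qed.

Lemma odd_pair_perm t : odd_perm (pair_perm t) = false.
Proof.
case: (prod_tpermP t) => ts -> _; elim: ts => [|u ts IH].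
  by rewrite big_nil pair_perm1 odd_perm1.
rewrite big_cons pair_permM odd_permM IH pair_perm_tperm odd_permM !odd_tperm.
by rewrite (inj_eq ev_inj) (inj_eq od_inj) addbb.
Qed.

End PairPerm.

Section Jmat.
Variable R : realFieldType.
Variable n : nat.
Local Notation m := (2 * n)%N.
Local Notation J := (Jmat R n).

Lemma Jmat_ev i (k : 'I_m) : J (ev i) k = (k == od i)%:R.
Proof. by rewrite mxE odd_ev -[k == od i]/(nat_of_ord k == (ev i).+1); case: (_ == _). Qed.

Lemma Jmat_od i (k : 'I_m) : J (od i) k = - (k == ev i)%:R.
Proof.
rewrite mxE odd_od -[k == ev i]/((nat_of_ord k).+1 == od i).
by case: (k.+1 == od i); rewrite /= ?oppr0.
Qed.

Lemma Jmat_ev_neq0 i (k : 'I_m) : J (ev i) k != 0 -> k = od i.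
Proof. by rewrite Jmat_ev; case: (k =P od i) => // _; rewrite eqxx. Qed.

Lemma Jmat_od_neq0 i (k : 'I_m) : J (od i) k != 0 -> k = ev i.
Proof. by rewrite Jmat_od; case: (k =P ev i) => // _; rewrite oppr0 eqxx. Qed.

Lemma Jmat_skew : J^T = - J.
Proof.
apply/matrixP; elim/ev_od_ind => i; elim/ev_od_ind => j;
  rewrite [LHS]mxE [RHS]mxE ?Jmat_ev ?Jmat_od ?opprK ?(inj_eq ev_inj) ?(inj_eq od_inj);
  by rewrite ?(eq_sym (od _) (ev _)) ?ev_neq_od ?oppr0 // eq_sym.
Qed.

Definition flips (s : 'S_m) : {set 'I_n} := [set i | odd (s (ev i))].

Lemma pfaff_term_Jmat_noflip s : flips s = set0 ->
  pfaff_term J s != 0 -> pfaff_term J s = 1.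
Proof.
move=> no_flip nz_term.
have s_ev i : s (ev i) = ev (ord_half (s (ev i))).
  have : i \notin flips s by rewrite no_flip inE.
  by rewrite inE => /negbTE odd_s; rewrite {1}(ord_halfE (s (ev i))) odd_s.
have s_od i : s (od i) = od (ord_half (s (ev i))).
  by apply: Jmat_ev_neq0; rewrite -s_ev; exact: pfaff_term_neq0_entry nz_term.
have t_inj : injective (fun i => ord_half (s (ev i))).
  by move=> a b /= eq_ab; apply/ev_inj/(@perm_inj _ s); rewrite s_ev [RHS]s_ev eq_ab.
have -> : s = pair_perm (perm t_inj).
  by apply/permP; elim/ev_od_ind => i;
    rewrite ?pair_perm_ev ?pair_perm_od permE /=; [exact: s_ev | exact: s_od].
rewrite /pfaff_term odd_pair_perm mul1r big1 // => i _.
by rewrite pair_perm_ev pair_perm_od Jmat_ev eqxx.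
Qed.

Lemma pfaff_term_Jmat s : pfaff_term J s != 0 -> pfaff_term J s = 1.
Proof.
have [k] := ubnP #|flips s|; elim: k s => // k IH s lt_flips nz_term.
have [no_flip|/set0Pn[i i_flip]] := eqVneq (flips s) set0.
  exact: pfaff_term_Jmat_noflip.
have s_ev : s (ev i) = od (ord_half (s (ev i))).
  by move: i_flip; rewrite inE => odd_s; rewrite {1}(ord_halfE (s (ev i))) odd_s.
have s_od : s (od i) = ev (ord_half (s (ev i))).
  by apply: Jmat_od_neq0; rewrite -s_ev; exact: pfaff_term_neq0_entry nz_term.
have term_swap := pfaff_term_swap s i (Jmat_skew).
rewrite -term_swap IH ?term_swap //.
have : flips (tperm (ev i) (od i) * s) \subset flips s :\ i.
  apply/subsetP => l; rewrite !inE permM.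
  have [->|nli] := eqVneq l i; first by rewrite tpermL s_od odd_ev.
  by rewrite tperm_ev_od_ev.
move/subset_leq_card; move: lt_flips; rewrite (cardsD1 i) i_flip; lia.
Qed.

Lemma pfaff_sum_Jmat_gt0 : 0 < pfaff_sum J.
Proof.
rewrite /pfaff_sum (bigD1 1%g) //= ltr_wpDr //.
  apply: sumr_ge0 => s _.
  by have [->|/pfaff_term_Jmat ->] := eqVneq (pfaff_term J s) 0.
rewrite /pfaff_term odd_perm1 mul1r big1 ?ltr01 // => i _.
by rewrite !perm1 Jmat_ev eqxx.
Qed.

End Jmat.

Section Symplectic.
Variable R : realFieldType.
Variable n : nat.
Local Notation m := (2 * n)%N.
Local Notation J := (Jmat R n).
Implicit Types (A P X : 'M[R]_m).

Lemma mulmx_Jmat_Jmat : J *m J = - 1%:M.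
Proof.
apply/matrixP; elim/ev_od_ind => i k; rewrite !mxE.
- rewrite (bigD1 (od i)) //= big1 ?addr0 => [|l nli]; last by rewrite Jmat_ev (negbTE nli) mul0r.
  by rewrite Jmat_ev eqxx mul1r Jmat_od eq_sym.
- rewrite (bigD1 (ev i)) //= big1 ?addr0 => [|l nli]; last by rewrite Jmat_od (negbTE nli) oppr0 mul0r.
  by rewrite Jmat_od eqxx Jmat_ev mulN1r eq_sym.
Qed.

Lemma symplectic_trmx P : symplectic P -> symplectic P^T.
Proof.
rewrite /symplectic trmxK => PJP.
have : (- (J *m P^T *m J)) *m P = 1%:M.
  by rewrite mulNmx -!mulmxA (mulmxA P^T) PJP mulmx_Jmat_Jmat opprK.
move/mulmx1C => PJPtJ.
have : P *m J *m P^T *m J = - 1%:M by rewrite -PJPtJ mulmxN opprK !mulmxA.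
move/(congr1 (mulmx^~ J)); rewrite -mulmxA mulmx_Jmat_Jmat mulmxN mulmx1 mulNmx mul1mx.
exact: oppr_inj.
Qed.

Lemma det_symplectic P : symplectic P -> \det P = 1.
Proof.
move=> PJP; apply: (mulIf (lt0r_neq0 (pfaff_sum_Jmat_gt0 R n))).
by rewrite mul1r -pfaff_sum_congruence PJP.
Qed.

Lemma mxtrace_Jmat_mul X :
  \tr (J *m X) = \sum_(i < n) (X (od i) (ev i) - X (ev i) (od i)).
Proof.
rewrite /mxtrace (big_ord_pairs _ (fun k => (J *m X) k k)); apply: eq_bigr => i _.
rewrite !mxE (bigD1 (od i)) //= big1 ?addr0 => [|l nli]; last first.
  by rewrite Jmat_ev (negbTE nli) mul0r.
rewrite (bigD1 (ev i)) //= [X in _ + (_ + X)]big1 ?addr0 => [|l nli]; last first.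
  by rewrite Jmat_od (negbTE nli) oppr0 mul0r.
by rewrite Jmat_ev Jmat_od !eqxx mul1r mulN1r.
Qed.

Lemma mxtrace_Jmat_mul_skew X : X^T = - X -> \tr (J *m X) = - (ssum X *+ 2).
Proof.
move=> skewX; rewrite mxtrace_Jmat_mul /ssum -sumrMnl -sumrN; apply: eq_bigr => i _.
have -> : X (od i) (ev i) = - X (ev i) (od i).
  by have := congr1 (fun M : 'M[R]_m => M (ev i) (od i)) skewX; rewrite !mxE.
by rewrite mulr2n opprD.
Qed.

Lemma Pf_congruence (B A : 'M[R]_m) : Pf (B^T *m A *m B) = \det B * Pf A.
Proof. by rewrite /Pf -[\sum_s _]/(pfaff_sum _) pfaff_sum_congruence mulrCA. Qed.

Lemma ssum_symplectic_congruence A P : A^T = - A -> symplectic P ->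
  ssum (P^T *m A *m P) = ssum A.
Proof.
move=> skewA PJP.
have skew_congr : (P^T *m A *m P)^T = - (P^T *m A *m P).
  by rewrite !trmx_mul trmxK skewA mulNmx mulmxN mulmxA.
have := symplectic_trmx PJP; rewrite /symplectic trmxK => PJPt.
have : \tr (J *m (P^T *m A *m P)) = \tr (J *m A).
  by rewrite !mulmxA mxtrace_mulC !mulmxA PJPt.
rewrite (mxtrace_Jmat_mul_skew skew_congr) (mxtrace_Jmat_mul_skew skewA).
by move/oppr_inj/eqP; rewrite eqrMn2r => /eqP.
Qed.

End Symplectic.

Unset Implicit Arguments.

Theorem theorem2p7 (R : realFieldType) (n : nat) (A P : 'M[R]_(2 * n)) :
  skew_invertible A -> symplectic P ->
  Pf (P^T *m A *m P) = Pf A /\ ssum (P^T *m A *m P) = ssum A.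
Proof.
move=> [skewA _] PJP; split; last exact: ssum_symplectic_congruence.
by rewrite Pf_congruence det_symplectic ?mul1r.
Qed.
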